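(* Let $G$ be a connected graph and $I\subseteq V(G)$. (1) If $I$ is a pre-cycle core of $G$, then $\pi_1(G|_I;x,y)=\pi_1(G;x,y)$ for all $x,y\in I$. (2) Conversely, if $x\in I$ and $\pi_1(G|_I;x)=\pi_1(G;x)$, then the connected component of $G|_I$ containing $x$ contains all cycles of $G$.
   Context: Graphs are simple and unoriented, possibly infinite. A cycle in $G$ is a closed path $(x_0,\dots,x_n=x_0)$ with no repeated vertices except $x_0=x_n$ and no edges $(x_i,x_j)$ of $G$ with $i-j\not\equiv0,\pm1\pmod n$. A pre-cycle core of $G$ is a subset $I\subseteq V(G)$ such that $G|_I$ is connected and contains all cycles of $G$. The fundamental groupoid of $G$ has, for vertices $x,y$, the set $\pi_1(G;x,y)$ of homotopy classes of paths from $x$ to $y$ (equivalently, the set of non-backtracking paths from $x$ to $y$, each class having a unique non-backtracking representative); $\pi_1(G;x)=\pi_1(G;x,x)$. For a subgraph $H$, $\pi_1(H;x,y)$ is regarded naturally as a subset of $\pi_1(G;x,y)$. *)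

From mathcomp Require Import all_boot.
Set Implicit Arguments. Unset Strict Implicit. Unset Printing Implicit Defensive.

Section Graphs.
Variable V : Type.

Definition simple_graph (adj : V -> V -> Prop) : Prop :=
  (forall a b, adj a b -> adj b a) /\ (forall a, ~ adj a a).

Definition induced (adj : V -> V -> Prop) (I : V -> Prop) : V -> V -> Prop :=
  fun a b => I a /\ I b /\ adj a b.

(* A path (x_0 = x, x_1, ..., x_n) is represented by x and the list [x_1;...;x_n]. *)
Fixpoint is_walk (adj : V -> V -> Prop) (x : V) (p : seq V) : Prop :=
  match p with
  | [::] => True
  | y :: q => adj x y /\ is_walk adj y q
  end.

Fixpoint non_backtracking (x : V) (p : seq V) : Prop :=
  match p with
  | y :: ((z :: _) as q) => x <> z /\ non_backtracking y q
  | _ => True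
  end.

(* pi_1(G; x, y), realised (via unique non-backtracking representatives)
   as the set of non-backtracking paths from x to y. *)
Definition pi1 (adj : V -> V -> Prop) (x y : V) (p : seq V) : Prop :=
  is_walk adj x p /\ non_backtracking x p /\ last x p = y.

Definition connected (adj : V -> V -> Prop) : Prop :=
  forall a b : V, exists p, is_walk adj a p /\ last a p = b.

Definition connected_on (adj : V -> V -> Prop) (I : V -> Prop) : Prop :=
  (exists a, I a) /\
  forall a b, I a -> I b -> exists p, is_walk (induced adj I) a p /\ last a p = b.

(* A cycle (x_0, ..., x_{n-1}, x_n = x_0), given by the list c = [x_0;...;x_{n-1}]
   (x0 is only a default value for nth). n >= 3, no repeated vertices, and
   x_i ~ x_j iff i - j = +-1 mod n (consecutive edges present, no chords). *)
Definition is_cycle (adj : V -> V -> Prop) (x0 : V) (c : seq V) : Prop :=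
  let n := size c in
  3 <= n /\
  (forall i j, i < n -> j < n -> nth x0 c i = nth x0 c j -> i = j) /\
  (forall i j, i < n -> j < n ->
     (adj (nth x0 c i) (nth x0 c j) <-> (j = (i + 1) %% n \/ i = (j + 1) %% n))).

(* A vertex set contains the cycle c (equivalently, the induced subgraph contains it). *)
Definition contains_cycle (I : V -> Prop) (x0 : V) (c : seq V) : Prop :=
  forall i, i < size c -> I (nth x0 c i).

Definition contains_all_cycles (adj : V -> V -> Prop) (I : V -> Prop) : Prop :=
  forall x0 c, is_cycle adj x0 c -> contains_cycle I x0 c.

Definition pre_cycle_core (adj : V -> V -> Prop) (I : V -> Prop) : Prop :=
  connected_on adj I /\ contains_all_cycles adj I.

Definition component (adj : V -> V -> Prop) (I : V -> Prop) (x : V) : V -> Prop :=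
  fun v => exists p, is_walk (induced adj I) x p /\ last x p = v.

End Graphs.

(* Everything rests on one fact: each vertex of a simple closed walk (no repeated vertices,
   chords allowed) lies on a cycle, since a chord splits such a walk into two shorter ones
   that together cover its vertices.
   (1) A non-backtracking walk between vertices of I that left I would contain an excursion,
   a segment whose interior avoids I.  If the excursion repeats a vertex, its first repetition
   closes a simple closed walk, of length at least 3 because there is no backtracking;
   otherwise a simple path in G|_I between its endpoints closes it up.  Either way some cycle
   leaves I.
   (2) Given a cycle C, go from x along a shortest path to C, once around C, and back.  This
   loop is non-backtracking, hence lies in G|_I, and its prefixes are walks in G|_I from x
   to every vertex of C. *)

From mathcomp Require Import all_boot zify.
From Stdlib Require Import Classical.
Set Implicit Arguments. Unset Strict Implicit. Unset Printing Implicit Defensive.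

Lemma ex_minimal_nat (P : nat -> Prop) d : P d ->
  exists m, [/\ m <= d, P m & forall k, k < m -> ~ P k].
Proof.
elim/ltn_ind: d => d IH Pd.
case: (classic (exists2 k, k < d & P k)) => [[k kd Pk]|min_d].
- have [m [mk Pm min_m]] := IH k kd Pk.
  by exists m; split => //; apply: leq_trans mk (ltnW kd).
- by exists d; split => // k kd Pk; apply: min_d; exists k.
Qed.

Lemma ex_excursion (P : nat -> Prop) n t : P 0 -> P n -> t <= n -> ~ P t ->
  exists a b, [/\ a < t < b, b <= n, P a, P b & forall u, a < u < b -> ~ P u].
Proof.
move=> P0 Pn tn nPt.
have [s [_ [st Pts] min_s]] : exists s, [/\ s <= t, s <= t /\ P (t - s)
    & forall k, k < s -> ~ (k <= t /\ P (t - k))].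
  by apply: ex_minimal_nat; rewrite subnn.
have [e [_ [te Pte] min_e]] : exists e, [/\ e <= n - t, t + e <= n /\ P (t + e)
    & forall k, k < e -> ~ (t + k <= n /\ P (t + k))].
  by apply: ex_minimal_nat; rewrite subnKC.
have s_gt0 : 0 < s by rewrite lt0n; apply/eqP => s0; move: Pts; rewrite s0 subn0.
have e_gt0 : 0 < e by rewrite lt0n; apply/eqP => e0; move: Pte; rewrite e0 addn0.
exists (t - s), (t + e); split => // [|u /andP [ut tu] Pu]; first lia.
case: (leqP u t) => [le_ut|lt_tu].
- by apply: (min_s (t - u)); [lia | rewrite subKn // leq_subr].
- by apply: (min_e (u - t)); [lia | rewrite subnKC; [split => //; lia | lia]].
Qed.

Section FunctionalWalks.
Variables (V : Type) (R : V -> V -> Prop).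
Implicit Types (f g : nat -> V) (x : V) (p : seq V).

(* A walk of length n is encoded by its vertex function, f 0, ..., f n; [fpath] gives back
   the list representation used by [is_walk]. *)
Definition fwalk f n := forall k, k < n -> R (f k) (f k.+1).

Definition fnb f n := forall k, k.+2 <= n -> f k <> f k.+2.

Definition inj_below f n := forall i j, i < n -> j < n -> f i = f j -> i = j.

Definition fpath f n := mkseq (fun k => f k.+1) n.

Definition fcat f m g k := if k <= m then f k else g (k - m).

Lemma fpathS f n : fpath f n.+1 = f 1 :: fpath (fun k => f k.+1) n.
Proof. by rewrite /fpath /mkseq /= (iotaDl 1 0) -map_comp. Qed.

Lemma is_walk_fpath f n : is_walk R (f 0) (fpath f n) <-> fwalk f n.
Proof.
elim: n f => [|n IH] f; first by split => // _ [].
rewrite fpathS /= IH; split => [[f01 walk_f] [|k] //|walk_f]; first exact: walk_f.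
by split => [|k kn]; [exact: walk_f | exact: walk_f k.+1 kn].
Qed.

Lemma non_backtracking_fpath f n : non_backtracking (f 0) (fpath f n) <-> fnb f n.
Proof.
elim: n f => [|n IH] f; first by split => // _ [].
case: n IH => [|n] IH; first by split => // _ [].
rewrite fpathS.
change (f 0 <> f 2 /\ non_backtracking (f 1) (fpath (fun k => f k.+1) n.+1) <-> fnb f n.+2).
rewrite IH; split => [[f02 nb_f] [|k] //|nb_f]; first exact: nb_f.
by split => [|k kn]; [exact: nb_f | exact: nb_f k.+1 kn].
Qed.

Lemma last_fpath f n : last (f 0) (fpath f n) = f n.
Proof. by case: n => // n; rewrite /fpath mkseqS last_rcons. Qed.

Lemma fpath_nth x p : fpath (nth x (x :: p)) (size p) = p.
Proof. by apply: (@eq_from_nth _ x) => [|i]; rewrite size_mkseq // => ip; rewrite nth_mkseq. Qed.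

Lemma is_walk_nth x p : is_walk R x p <-> fwalk (nth x (x :: p)) (size p).
Proof. by rewrite -is_walk_fpath fpath_nth. Qed.

Lemma non_backtracking_nth x p : non_backtracking x p <-> fnb (nth x (x :: p)) (size p).
Proof. by rewrite -non_backtracking_fpath fpath_nth. Qed.

Lemma last_nth x p : last x p = nth x (x :: p) (size p).
Proof. by rewrite -[in RHS]last_fpath fpath_nth. Qed.

Lemma fwalk_shift f n a m : fwalk f n -> a + m <= n -> fwalk (fun k => f (a + k)) m.
Proof. by move=> walk_f amn k km; rewrite addnS; apply: walk_f; lia. Qed.

Lemma fwalk_le f n m : fwalk f n -> m <= n -> fwalk f m.
Proof. by move=> walk_f mn k km; apply: walk_f; lia. Qed.

Lemma fnb_shift f n a m : fnb f n -> a + m <= n -> fnb (fun k => f (a + k)) m.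
Proof. by move=> nb_f amn k km; rewrite !addnS; apply: nb_f; lia. Qed.

Lemma fnb_inj f n : inj_below f n.+1 -> fnb f n.
Proof. by move=> inj_f k kn /inj_f; lia. Qed.

Lemma fwalk_rev f n : (forall a b, R a b -> R b a) -> fwalk f n ->
  fwalk (fun k => f (n - k)) n.
Proof.
move=> symR walk_f k kn; apply: symR.
by rewrite [n - k](_ : _ = (n - k.+1).+1); [apply: walk_f | ]; lia.
Qed.

Lemma fnb_rev f n : fnb f n -> fnb (fun k => f (n - k)) n.
Proof. by move=> nb_f k kn; rewrite (_ : n - k = (n - k.+2).+2); [apply/nesym/nb_f|]; lia. Qed.

Lemma fcat_le f m g k : k <= m -> fcat f m g k = f k.
Proof. by rewrite /fcat => ->. Qed.

Lemma fcat_ge f m g k : f m = g 0 -> m <= k -> fcat f m g k = g (k - m).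
Proof.
rewrite /fcat => fg mk; case: ifP => // km.
have -> : k = m by lia.
by rewrite subnn.
Qed.

Lemma fcat_fwalk f m g n : f m = g 0 -> fwalk f m -> fwalk g n -> fwalk (fcat f m g) (m + n).
Proof.
move=> fg walk_f walk_g k kmn; case: (ltnP k m) => km.
- by rewrite !fcat_le //; [exact: walk_f | exact: ltnW].
- rewrite !fcat_ge // ?subSn //; last exact: ltnW.
  by apply: walk_g; lia.
Qed.

Lemma fcat_fnb f m g n : f m = g 0 -> fnb f m -> fnb g n ->
  (0 < m -> 0 < n -> f m.-1 <> g 1) -> fnb (fcat f m g) (m + n).
Proof.
move=> fg nb_f nb_g junction k kmn.
have [km|[km|km]] : k.+2 <= m \/ k.+1 = m \/ m <= k by lia.
- by rewrite !fcat_le //; [apply: nb_f | lia].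
- rewrite fcat_le ?fcat_ge //; try lia.
  have -> : k.+2 - m = 1 by lia.
  have -> : k = m.-1 by lia.
  by apply: junction; lia.
- rewrite !fcat_ge //; try lia.
  by rewrite (_ : k.+2 - m = (k - m).+2); [apply: nb_g | ]; lia.
Qed.

Lemma inj_below_or_repeat f n :
  inj_below f n.+1 \/ exists i j, [/\ i < j, j <= n & f i = f j].
Proof.
case: (classic (exists i j, [/\ i < j, j <= n & f i = f j])) => [|no_repeat]; [by right | left].
move=> i j i_n j_n fij; apply: NNPP => ij; apply: no_repeat.
by case: (ltngtP i j) ij => // [lt_ij|lt_ji] _; [exists i, j | exists j, i]; split.
Qed.

Lemma fwalk_shorten f n : fwalk f n ->
  exists m g, [/\ g 0 = f 0, g m = f n, fwalk g m & inj_below g m.+1].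
Proof.
elim/ltn_ind: n f => n IH f walk_f.
case: (inj_below_or_repeat f n) => [inj_f|[i [j [ij jn fij]]]]; first by exists n, f.
have junction : f i = f (j + 0) by rewrite addn0.
have walk_cut : fwalk (fcat f i (fun k => f (j + k))) (i + (n - j)).
  apply: fcat_fwalk => //; [apply: fwalk_le walk_f _ | apply: fwalk_shift walk_f _]; lia.
have [m [g [g0 gm walk_g inj_g]]] := IH (i + (n - j)) ltac:(lia) _ walk_cut.
exists m, g; split => //.
by rewrite gm fcat_ge //; [congr f | ]; lia.
Qed.

End FunctionalWalks.

Lemma modnSml m n : (m %% n).+1 %% n = m.+1 %% n.
Proof. by rewrite -[(m %% n).+1]addn1 modnDml addn1. Qed.

Section ClosedWalks.
Variables (V : Type) (adj : V -> V -> Prop).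
Hypothesis simple_adj : simple_graph adj.
Implicit Types (f g : nat -> V) (I : V -> Prop).

Let adj_sym a b : adj a b -> adj b a. Proof. exact: simple_adj.1. Qed.
Let adj_irr a : ~ adj a a. Proof. exact: simple_adj.2. Qed.

(* Unlike [is_cycle], chords are allowed. *)
Definition simple_closed_walk f n :=
  [/\ 3 <= n, inj_below f n & forall i, i < n -> adj (f i) (f (i.+1 %% n))].

Definition rot f n s k := f ((s + k) %% n).

Lemma simple_closed_walk_of_fwalk f n : f n = f 0 -> 3 <= n -> inj_below f n ->
  fwalk adj f n -> simple_closed_walk f n.
Proof.
move=> fn0 n3 inj_f walk_f; split => // i i_n.
case: (ltnP i.+1 n) => [lt_in|le_ni]; first by rewrite modn_small //; apply: walk_f.
have ein : i.+1 = n by lia.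
by rewrite ein modnn -fn0 -ein; apply: walk_f.
Qed.

Lemma simple_closed_walk_of_cycle x0 c : is_cycle adj x0 c ->
  simple_closed_walk (nth x0 c) (size c).
Proof.
move=> [c3 [inj_c adj_c]]; split => // i i_c.
by apply/adj_c => //; [rewrite ltn_mod; lia | left; rewrite addn1].
Qed.

Lemma simple_closed_walk_prefix f n d : simple_closed_walk f n -> 3 <= d <= n ->
  adj (f d.-1) (f 0) -> simple_closed_walk f d.
Proof.
move=> [_ inj_f adj_f] /andP [d3 dn] closing; split => // [i j i_d j_d|i i_d].
  by apply: inj_f; lia.
case: (ltnP i.+1 d) => [lt_id|le_di].
  by rewrite modn_small // -(@modn_small i.+1 n); [apply: adj_f | ]; lia.
have -> : i = d.-1 by lia.
by rewrite prednK ?modnn //; lia.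
Qed.

Lemma rot_simple_closed_walk f n s : simple_closed_walk f n ->
  simple_closed_walk (rot f n s) n.
Proof.
move=> [n3 inj_f adj_f]; split => // [i j i_n j_n|i i_n].
  rewrite /rot => /inj_f eq_mod.
  have : s + i == s + j %[mod n] by apply/eqP; apply: eq_mod; rewrite ltn_mod; lia.
  by rewrite eqn_modDl !modn_small // => /eqP.
by rewrite /rot modnDmr addnS -modnSml; apply: adj_f; rewrite ltn_mod; lia.
Qed.

Lemma rot_fwalk f n s : simple_closed_walk f n -> fwalk adj (rot f n s) n.
Proof.
move=> [n3 _ adj_f] k _; rewrite /rot addnS -modnSml.
by apply: adj_f; rewrite ltn_mod; lia.
Qed.

Lemma rot_fnb f n s : simple_closed_walk f n -> fnb (rot f n s) n.
Proof.
move=> [n3 inj_f _] k _ /inj_f; rewrite !ltn_mod => /(_ ltac:(lia) ltac:(lia)) /eqP.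
by rewrite !addnS -[(s + k).+2]addn2 -{1}[s + k]addn0 eqn_modDl mod0n modn_small.
Qed.

Lemma rot_period f n s : rot f n s n = rot f n s 0.
Proof. by rewrite /rot modnDr addn0. Qed.

Lemma rot_surj f n s t : s <= n -> t < n -> exists2 u, u < n & rot f n s u = f t.
Proof.
move=> sn tn; exists ((t + (n - s)) %% n); first by rewrite ltn_mod; lia.
by rewrite /rot modnDmr addnCA subnKC // modnDr modn_small.
Qed.

Lemma simple_closed_walk_cycle_or_chord f n : simple_closed_walk f n ->
  is_cycle adj (f 0) (mkseq f n) \/
  exists i j, [/\ i.+2 <= j < n, adj (f i) (f j) & ~ (i = 0 /\ j = n.-1)].
Proof.
move=> [n3 inj_f adj_f].
case: (classic (exists i j, [/\ i.+2 <= j < n, adj (f i) (f j) & ~ (i = 0 /\ j = n.-1)]));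
  [by right | move=> no_chord; left].
have consecutive i j : i < j < n -> adj (f i) (f j) -> j = i.+1 \/ (i = 0 /\ j = n.-1).
  move=> /andP [ij jn] fij; case: (ltnP i.+1 j) => [lt_ij|]; last by left; lia.
  by right; apply: NNPP => ends; apply: no_chord; exists i, j; split => //; apply/andP.
rewrite /is_cycle size_mkseq; split => //; split => [i j i_n j_n|i j i_n j_n].
  by rewrite !nth_mkseq //; apply: inj_f.
rewrite !nth_mkseq // !addn1; split => [fij|[->|->]].
- case: (ltngtP i j) => [ij|ji|eij]; last by move: fij; rewrite eij => /adj_irr.
  + case: (consecutive i j _ fij); first by rewrite ij.
    * by move=> eji; left; rewrite modn_small //; lia.
    * by move=> [-> ->]; right; rewrite prednK ?modnn; lia.
  + case: (consecutive j i _ (adj_sym fij)); first by rewrite ji.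
    * by move=> eij; right; rewrite modn_small //; lia.
    * by move=> [-> ->]; left; rewrite prednK ?modnn; lia.
- exact: adj_f.
- exact/adj_sym/adj_f.
Qed.

Lemma simple_closed_walk_split g n d u : simple_closed_walk g n -> 2 <= d <= n - 2 ->
  adj (g 0) (g d) -> u < n ->
  exists m h v, [/\ m < n, simple_closed_walk h m, v < m & h v = g u].
Proof.
move=> scw_g /andP [d2 dn] chord u_n; case: (leqP u d) => [ud|du].
  exists d.+1, g, u; split; [lia | | lia | by []].
  by apply: simple_closed_walk_prefix scw_g _ _; [lia | exact: adj_sym].
exists (n - d).+1, (rot g n d), (u - d); split; [lia | | lia | ].
- apply: simple_closed_walk_prefix; [exact: rot_simple_closed_walk | lia | ].
  by rewrite /rot /= subnKC ?modnn ?addn0 ?modn_small //; lia.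
- by rewrite /rot subnKC ?modn_small //; lia.
Qed.

Lemma simple_closed_walk_in_cycles I f n : contains_all_cycles adj I ->
  simple_closed_walk f n -> forall t, t < n -> I (f t).
Proof.
move=> cycles_in; elim/ltn_ind: n f => n IH f scw_f t t_n.
case: (simple_closed_walk_cycle_or_chord scw_f) => [cyc|[i [j [/andP [ij j_n] fij not_ends]]]].
  by have := cycles_in _ _ cyc t; rewrite size_mkseq nth_mkseq //; apply.
(* Rotate so that the chord starts at index 0. *)
have [u u_n <-] : exists2 u, u < n & rot f n i u = f t by apply: rot_surj; lia.
have chord : adj (rot f n i 0) (rot f n i (j - i)).
  by rewrite /rot addn0 subnKC ?modn_small //; lia.
have d_bounds : 2 <= j - i <= n - 2 by lia.
have [m [h [v [mn scw_h vm <-]]]] :=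
  simple_closed_walk_split (rot_simple_closed_walk i scw_f) d_bounds chord u_n.
exact: IH mn h scw_h v vm.
Qed.

Lemma fwalk_induced I f n : fwalk (induced adj I) f n -> fwalk adj f n.
Proof. by move=> walk_f k kn; case: (walk_f k kn) => _ []. Qed.

Lemma fwalk_induced_mem I f n k : fwalk (induced adj I) f n -> 0 < n -> k <= n -> I (f k).
Proof.
move=> walk_f n0 kn; case: (ltnP k n) => [/walk_f [] //|nk].
have -> : k = n.-1.+1 by lia.
by case: (walk_f n.-1 ltac:(lia)) => _ [].
Qed.

Lemma fnb_repeat_simple_closed_walk f n i j : fwalk adj f n -> fnb f n ->
  i < j -> j <= n -> f i = f j ->
  exists a m, a + m <= n /\ simple_closed_walk (fun k => f (a + k)) m.
Proof.
move=> walk_f nb_f ij jn fij.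
have [b [bj [a ab fab] min_b]] := @ex_minimal_nat (fun b => exists2 a, a < b & f a = f b) j
  (ex_intro2 _ _ i ij fij).
have b_a1 : b <> a.+1 by move=> ba; have := walk_f a ltac:(lia); rewrite -ba -fab; exact: adj_irr.
have b_a2 : b <> a.+2 by move=> ba; apply: (nb_f a); [lia | rewrite fab ba].
have closed : f (a + (b - a)) = f (a + 0) by rewrite addn0 subnKC // ltnW.
exists a, (b - a); split; first lia.
apply: (simple_closed_walk_of_fwalk (f := fun k => f (a + k)) closed);
  [lia | | apply: fwalk_shift walk_f _; lia].
case: (inj_below_or_repeat (fun k => f (a + k)) (b - a).-1) => [|[x [y [xy yb fxy]]]].
  by rewrite prednK //; lia.
by exfalso; apply: (min_b (a + y)); [lia | exists (a + x); [lia | ]].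
Qed.

Lemma detour_simple_closed_walk I f n g m : fwalk adj f n -> inj_below f n.+1 -> 2 <= n ->
  (forall u, 0 < u < n -> ~ I (f u)) ->
  fwalk (induced adj I) g m -> inj_below g m.+1 -> g 0 = f n -> g m = f 0 ->
  simple_closed_walk (fcat f n g) (n + m).
Proof.
move=> walk_f inj_f n2 off_I walk_g inj_g g0 gm.
have m0 : 0 < m.
  by rewrite lt0n; apply/eqP => m0; move: gm; rewrite m0 g0 => /inj_f; lia.
have cross x y : x <= n -> n < y < n + m -> f x <> g (y - n).
  move=> xn /andP [ny ynm] fxg.
  have Ix : I (f x) by rewrite fxg; apply: fwalk_induced_mem walk_g _ _; lia.
  have [x0|xn'] : x = 0 \/ x = n by apply: NNPP => ?; apply: (off_I x) => //; lia.
  - by move: fxg; rewrite x0 -gm => /inj_g; lia.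
  - by move: fxg; rewrite xn' -g0 => /inj_g; lia.
have closed : fcat f n g (n + m) = fcat f n g 0 by rewrite (fcat_ge (esym g0)) ?addKn ?leq_addr.
apply: simple_closed_walk_of_fwalk closed _ _ _; first lia.
- move=> x y x_nm y_nm; case: (leqP x n) => xn; case: (leqP y n) => yn.
  + by rewrite !fcat_le // => /inj_f; lia.
  + by rewrite fcat_le // fcat_ge 1?ltnW // => /cross; lia.
  + by rewrite fcat_ge 1?ltnW // fcat_le // => /esym /cross; lia.
  + by rewrite !fcat_ge 1?ltnW // => /inj_g; lia.
- exact: fcat_fwalk (esym g0) walk_f (fwalk_induced walk_g).
Qed.

Lemma pre_cycle_core_no_excursion I f n : pre_cycle_core adj I ->
  fwalk adj f n -> fnb f n -> 2 <= n -> I (f 0) -> I (f n) ->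
  ~ (forall u, 0 < u < n -> ~ I (f u)).
Proof.
move=> [[_ conn_I] cycles_I] walk_f nb_f n2 If0 Ifn off_I.
have in_I := simple_closed_walk_in_cycles cycles_I.
case: (inj_below_or_repeat f n) => [inj_f|[i [j [ij jn fij]]]].
- have [q [walk_q last_q]] := conn_I _ _ Ifn If0.
  move/is_walk_nth: walk_q; rewrite last_nth in last_q.
  move=> /fwalk_shorten [m [g [g0 gm walk_g inj_g]]].
  have scw := detour_simple_closed_walk walk_f inj_f n2 off_I walk_g inj_g g0 (etrans gm last_q).
  by apply: (off_I 1); [lia | move: (in_I _ _ scw 1 ltac:(lia)); rewrite fcat_le //; lia].
- have [a [m [amn scw]]] := fnb_repeat_simple_closed_walk walk_f nb_f ij jn fij.
  have [m3 _ _] := scw.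
  by apply: (off_I (a + 1)); [lia | apply: in_I scw 1 _; lia].
Qed.

Lemma pi1_pre_cycle_core I x y p : pre_cycle_core adj I -> I x -> I y ->
  pi1 (induced adj I) x y p <-> pi1 adj x y p.
Proof.
move=> core Ix Iy; split=> -[walk_p [nb_p last_p]]; split => //.
  by apply/is_walk_nth; apply: (fwalk_induced (I := I)); apply/is_walk_nth.
move/is_walk_nth: walk_p => walk_F; move/non_backtracking_nth: nb_p => nb_F.
rewrite last_nth in last_p.
set F := nth x (x :: p) in walk_F nb_F last_p *; set L := size p in walk_F nb_F last_p *.
suff all_I t : t <= L -> I (F t).
  by apply/is_walk_nth => k kL; split; [|split]; [apply: all_I; lia | apply: all_I | exact: walk_F].
move=> tL; apply: NNPP => notI.
have IFL : I (F L) by rewrite last_p.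
have [a [b [/andP [a_t t_b] bL Ia Ib off_I]]] :=
  ex_excursion (P := fun t => I (F t)) Ix IFL tL notI.
apply: (pre_cycle_core_no_excursion (f := fun k => F (a + k)) (n := b - a) core).
- by apply: fwalk_shift walk_F _; lia.
- by apply: fnb_shift nb_F _; lia.
- lia.
- by rewrite addn0.
- by rewrite subnKC // ltnW // (ltn_trans a_t).
- by move=> u /andP [u0 uba]; apply: off_I; lia.
Qed.

Lemma shortest_path_to_simple_closed_walk x f n : connected adj -> simple_closed_walk f n ->
  exists e h, [/\ h 0 = x, exists2 s, s < n & h e = f s, fwalk adj h e, inj_below h e.+1 &
    forall k s', k < e -> s' < n -> h k <> f s'].
Proof.
move=> conn [n3 _ _]; have [q [walk_q last_q]] := conn x (f 0).
move/is_walk_nth: walk_q; rewrite last_nth in last_q.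
move=> /fwalk_shorten [m [h [h0 hm walk_h inj_h]]].
have hit_m : m <= m /\ (exists2 s, s < n & h m = f s) by split => //; exists 0; [lia | rewrite hm].
have [e [em [_ hit_e] min_e]] :=
  ex_minimal_nat (P := fun e => e <= m /\ exists2 s, s < n & h e = f s) hit_m.
exists e, h; split => //.
- exact: fwalk_le walk_h em.
- by move=> i j i_e j_e; apply: inj_h; lia.
- by move=> k s' ke s'n hkf; apply: (min_e k ke); split; [lia | exists s'].
Qed.

Lemma closed_walk_through_cycle x x0 c : connected adj -> is_cycle adj x0 c ->
  exists W L, [/\ W 0 = x, W L = x, fwalk adj W L, fnb W L &
    forall i, i < size c -> exists2 k, k <= L & W k = nth x0 c i].
Proof.
move=> conn /simple_closed_walk_of_cycle scw_c.
set f := nth x0 c in scw_c *; set n := size c in scw_c *.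
have [e [h [h0 [s s_n hes] walk_h inj_h off_cycle]]] :=
  shortest_path_to_simple_closed_walk x conn scw_c.
have [n3 _ _] := scw_c.
pose r := rot f n s; pose back k := h (e - k).
have r0 : r 0 = h e by rewrite /r /rot addn0 modn_small.
have rn : r n = back 0 by rewrite /back subn0 -r0 /r rot_period.
have on_cycle k : exists2 s', s' < n & r k = f s'.
  by exists ((s + k) %% n); first by rewrite ltn_mod; lia.
have enter : h e = fcat r n back 0 by rewrite fcat_le.
have leave k : 0 < e -> h e.-1 <> r k.
  by move=> e0; have [s' s'n ->] := on_cycle k; apply: off_cycle; lia.
exists (fcat h e (fcat r n back)), (e + (n + e)); split.
- by rewrite fcat_le.
- by rewrite (fcat_ge enter) ?addKn ?(fcat_ge rn) ?addKn /back ?subnn //; lia.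
- exact: fcat_fwalk enter walk_h (fcat_fwalk rn (rot_fwalk s scw_c) (fwalk_rev adj_sym walk_h)).
- apply: fcat_fnb enter (fnb_inj inj_h) _ _.
    apply: fcat_fnb rn (rot_fnb (s := s) scw_c) (fnb_rev (fnb_inj inj_h)) _.
    by move=> _ e0; rewrite /back subn1; apply/nesym/leave.
  by move=> e0 _; rewrite fcat_le; [exact: leave | lia].
- move=> i i_n; have [u u_n rui] : exists2 u, u < n & r u = f i by apply: rot_surj; lia.
  by exists (e + u); [lia | rewrite (fcat_ge enter) ?leq_addr // addKn fcat_le // ltnW].
Qed.

Lemma component_contains_all_cycles I x : connected adj ->
  (forall p, pi1 (induced adj I) x x p <-> pi1 adj x x p) ->
  contains_all_cycles adj (component adj I x).
Proof.
move=> conn pi1_eq x0 c cyc i i_c.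
have [W [L [W0 WL walk_W nb_W around]]] := closed_walk_through_cycle x conn cyc.
have [k kL <-] := around i i_c.
have [walk_I _] : pi1 (induced adj I) x x (fpath W L).
  apply/pi1_eq; rewrite -W0; split; first exact/is_walk_fpath.
  by split; [exact/non_backtracking_fpath | rewrite last_fpath WL W0].
exists (fpath W k); rewrite -W0 last_fpath; split => //.
by apply/is_walk_fpath; apply: fwalk_le kL; apply/is_walk_fpath; rewrite W0.
Qed.

End ClosedWalks.

Theorem lemma2p5 (V : Type) (adj : V -> V -> Prop) (I : V -> Prop) :
  simple_graph adj -> connected adj ->
  (pre_cycle_core adj I ->
     forall x y, I x -> I y ->
       forall p, pi1 (induced adj I) x y p <-> pi1 adj x y p) /\
  (forall x, I x ->
     (forall p, pi1 (induced adj I) x x p <-> pi1 adj x x p) ->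
     contains_all_cycles adj (component adj I x)).
Proof.
move=> simple_adj conn; split => [core x y Ix Iy p | x _ pi1_eq].
- exact: pi1_pre_cycle_core.
- exact: component_contains_all_cycles.
Qed.
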